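(* Let $0<\theta<\pi$ and $L\ge I(\theta)+\log 2$, where $I(\vartheta)=2\log\sec(\vartheta/2)$. Let $\triangle ABC$ be a geodesic triangle in hyperbolic space with $|CA|>L$, $|CB|>L$ and $\angle C=\pi-\theta$. Then (1) $\angle A+\angle B<e^{(-L+3\log2)/2}\sin(\theta/2)$; (2) $I(\theta)-\dfrac{e^{(-L+5\log 2)/2}\sin(\theta/2)}{L-\log 2}<|CA|+|CB|-|AB|<I(\theta)$. *)

(* hyperboloid model of hyperbolic n-space H^n (curvature -1). *)
From Stdlib Require Import Reals Lra List.
Open Scope R_scope.

(* Points of R^{n+1} are represented as functions nat -> R; only the
   coordinates 0..n are used. *)

Definition mink (n : nat) (x y : nat -> R) : R :=
  - (x O * y O) + fold_right Rplus 0 (map (fun i => x i * y i) (seq 1 n)).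

Definition hyp_point (n : nat) (x : nat -> R) : Prop :=
  mink n x x = -1 /\ 0 < x O.

Definition arcosh (t : R) : R := ln (t + sqrt (t * t - 1)).

Definition hdist (n : nat) (x y : nat -> R) : R := arcosh (- mink n x y).

(* Unit-speed initial tangent vector (up to positive scaling) at C of the
   geodesic from C to A: the projection of A onto T_C H^n = C^perp. *)
Definition tangent_at (n : nat) (C A : nat -> R) : nat -> R :=
  fun i => A i + mink n A C * C i.

(* Riemannian angle at vertex C of the geodesic triangle ACB, i.e. the angle
   between the geodesic segments CA and CB (the tangent space is spacelike, so
   the Minkowski form is positive definite on it). *)
Definition hangle (n : nat) (C A B : nat -> R) : R :=
  let u := tangent_at n C A in
  let v := tangent_at n C B in
  acos (mink n u v / (sqrt (mink n u u) * sqrt (mink n v v))).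

Definition Ifun (t : R) : R := 2 * ln (1 / cos (t / 2)).

From Stdlib Require Import Reals Lra Psatz List.
Open Scope R_scope.

(* Write x, y, z for the hyperbolic cosines of |CA|, |CB|,
   |AB| (minus the Minkowski products of the vertices).  On the hyperboloid the
   angle at a vertex is given by the law of cosines, so the statement is a
   statement about the three reals x, y, z only (far_triangle_cosh).  Put
   c = cos (theta/2), s = sin (theta/2), m = exp (L/2), and parametrize the long
   sides by p = exp |CA|, q = exp |CB| > m^2, so x = (p + 1/p)/2 and
   sinh |CA| = (p - 1/p)/2.  The angle condition at C reads
   z = x y + (c^2 - s^2) sinh|CA| sinh|CB|, which gives the closed form
   2 z p q = c^2 (p^2 q^2 + 1) + s^2 (p^2 + q^2).  From it we get
   - exp |AB| lies between c^2 p q and c^2 p q (1 + s^2/m^2), which yields the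
     two-sided estimate of the excess |CA| + |CB| - |AB| around I(theta);
   - the tangent of the angle at A is below its value 2 s c M / (M^2 c^2 - s^2),
     M = m^2, in the limit |CA| = L, |CB| = oo, and this is below
     tan (sqrt 2 s / m); by symmetry the same holds at B. *)

Lemma sum_map_lin (X Y W : nat -> R) (k : R) (l : list nat) :
  fold_right Rplus 0 (map (fun i => (X i + k * Y i) * W i) l) =
  fold_right Rplus 0 (map (fun i => X i * W i) l)
  + k * fold_right Rplus 0 (map (fun i => Y i * W i) l).
Proof. induction l as [|i l IH]; simpl; [ring | rewrite IH; ring]. Qed.

Lemma mink_sym (n : nat) (X Y : nat -> R) : mink n X Y = mink n Y X.
Proof.
  unfold mink. rewrite (Rmult_comm (X O)). do 2 f_equal.
  apply map_ext. intros; ring.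
Qed.

Lemma mink_linl (n : nat) (X Y W : nat -> R) (k : R) :
  mink n (fun i => X i + k * Y i) W = mink n X W + k * mink n Y W.
Proof. unfold mink. rewrite sum_map_lin. simpl. ring. Qed.

Lemma mink_linr (n : nat) (X Y W : nat -> R) (k : R) :
  mink n W (fun i => X i + k * Y i) = mink n W X + k * mink n W Y.
Proof. rewrite !(mink_sym n W), mink_linl. reflexivity. Qed.

Definition chd (n : nat) (P Q : nat -> R) : R := - mink n P Q.

Lemma chd_sym (n : nat) (P Q : nat -> R) : chd n P Q = chd n Q P.
Proof. unfold chd. rewrite mink_sym. reflexivity. Qed.

(* The angle at a vertex whose two sides have hyperbolic cosines x and y and
   whose opposite side has hyperbolic cosine z (hyperbolic law of cosines). *)
Definition vertex_angle (x y z : R) : R :=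
  acos ((x * y - z) / (sqrt (x * x - 1) * sqrt (y * y - 1))).

Lemma tangent_dot (n : nat) (P Q T : nat -> R) : mink n P P = -1 ->
  mink n (tangent_at n P Q) (tangent_at n P T) = mink n P Q * mink n P T + mink n Q T.
Proof.
  intros HP. unfold tangent_at.
  rewrite mink_linl, !mink_linr, HP, (mink_sym n Q P), (mink_sym n T P). ring.
Qed.

Lemma hangle_vertex_angle (n : nat) (P Q T : nat -> R) :
  mink n P P = -1 -> mink n Q Q = -1 -> mink n T T = -1 ->
  hangle n P Q T = vertex_angle (chd n P Q) (chd n P T) (chd n Q T).
Proof.
  intros HP HQ HT. unfold hangle, vertex_angle, chd.
  rewrite !tangent_dot, HQ, HT by exact HP.
  rewrite !Rmult_opp_opp. unfold Rminus. rewrite Ropp_involutive. reflexivity.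
Qed.

Lemma exp_param_of_arcosh (x : R) : 0 < arcosh x ->
  x = (exp (arcosh x) + / exp (arcosh x)) / 2 /\
  sqrt (x * x - 1) = (exp (arcosh x) - / exp (arcosh x)) / 2.
Proof.
  unfold arcosh. set (w := x + sqrt (x * x - 1)). intros Hpos.
  assert (Hw : 0 < w).
  { unfold ln in Hpos. destruct (Rlt_dec 0 w); [assumption | lra]. }
  assert (Hw1 : 1 < w) by (rewrite <- (exp_ln w Hw), <- exp_0; apply exp_increasing; lra).
  assert (Hsq : 0 <= x * x - 1).
  { destruct (Rle_dec 0 (x * x - 1)) as [h | h]; [exact h |].
    assert (sqrt (x * x - 1) = 0) by (apply sqrt_neg_0; lra). unfold w in Hw1. nra. }
  pose proof (sqrt_sqrt _ Hsq). pose proof (sqrt_pos (x * x - 1)).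
  assert (Hinv : / w = x - sqrt (x * x - 1)) by (unfold w; field_simplify_eq; nra).
  rewrite exp_ln, Hinv by exact Hw. unfold w. split; field.
Qed.

Lemma exp_param_sinh_pos (p : R) : 1 < p -> 0 < (p - / p) / 2.
Proof.
  intros Hp. assert (/ p < 1) by (rewrite <- Rinv_1; apply Rinv_lt_contravar; lra). lra.
Qed.

Lemma exp_param_sq (p : R) : 0 < p ->
  ((p - / p) / 2) * ((p - / p) / 2) = ((p + / p) / 2) * ((p + / p) / 2) - 1.
Proof. intros Hp. field. lra. Qed.

(* e^arcosh z = z + sqrt (z^2 - 1) is the larger root of W^2 - 2 z W + 1; these
   two lemmas compare it with a number W through the sign of that quadratic. *)
Lemma exp_arcosh_lower (z W : R) : 1 < z -> W * W + 1 < 2 * W * z ->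
  W < z + sqrt (z * z - 1).
Proof.
  intros Hz HW.
  assert (HS2 : sqrt (z * z - 1) * sqrt (z * z - 1) = z * z - 1) by (apply sqrt_sqrt; nra).
  assert (HS : 0 < sqrt (z * z - 1)) by (apply sqrt_lt_R0; nra).
  destruct (Rle_dec W z) as [h | h]; [lra |].
  assert ((W - z) * (W - z) < sqrt (z * z - 1) * sqrt (z * z - 1)) by nra.
  nra.
Qed.

Lemma exp_arcosh_upper (z U : R) : z <= U -> 2 * U * z <= U * U + 1 ->
  z + sqrt (z * z - 1) <= U.
Proof.
  intros HzU HU.
  destruct (Rle_dec 0 (z * z - 1)) as [h | h].
  - assert (HS2 : sqrt (z * z - 1) * sqrt (z * z - 1) = z * z - 1) by (apply sqrt_sqrt; lra).
    pose proof (sqrt_pos (z * z - 1)). nra.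
  - rewrite sqrt_neg_0 by lra. lra.
Qed.

Lemma law_of_cosines_supplement (x y z theta : R) :
  0 < theta < PI -> 0 < sqrt (x * x - 1) -> 0 < sqrt (y * y - 1) ->
  vertex_angle x y z = PI - theta ->
  z = x * y + cos theta * sqrt (x * x - 1) * sqrt (y * y - 1).
Proof.
  unfold vertex_angle. set (sx := sqrt (x * x - 1)). set (sy := sqrt (y * y - 1)).
  set (w := (x * y - z) / (sx * sy)). intros Ht Hx Hy H.
  assert (Hw : -1 < w < 1).
  { unfold acos in H. destruct (Rle_dec w (-1)); [lra |].
    destruct (Rle_dec 1 w); lra. }
  assert (Hcw : cos (acos w) = w) by (apply cos_acos; lra).
  rewrite H, Rtrigo_facts.cos_pi_minus in Hcw.
  assert (x * y - z = w * (sx * sy)) by (unfold w; field; lra).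
  nra.
Qed.

(* Tangent form of the law of cosines: if cosh z = x y + gamma sx sy with
   gamma = cos C and sigma = sin C, the angle between the sides with
   hyperbolic cosines z and x has cosine D / sqrt (D^2 + N^2), where
   D = y sx + gamma x sy and N = sigma sy; indeed sinh^2 z = D^2 + N^2. *)
Lemma vertex_angle_tangent_form (x sx y sy z gamma sigma : R) :
  0 < sx -> sx * sx = x * x - 1 -> sy * sy = y * y - 1 ->
  gamma * gamma + sigma * sigma = 1 -> z = x * y + gamma * sx * sy ->
  vertex_angle z x y =
  acos ((y * sx + gamma * x * sy)
        / sqrt ((y * sx + gamma * x * sy) * (y * sx + gamma * x * sy)
                + (sigma * sy) * (sigma * sy))).
Proof.
  intros Hsx Ex Ey Egs Ez. unfold vertex_angle.
  set (D := y * sx + gamma * x * sy).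
  assert (Hz : z * z - 1 = D * D + (sigma * sy) * (sigma * sy)).
  { assert (E1 : (gamma * gamma * (sy * sy) - y * y) * (sx * sx)
               = (gamma * gamma * (sy * sy) - y * y) * (x * x - 1)) by (rewrite Ex; reflexivity).
    assert (E2 : sigma * sigma * (sy * sy) = (1 - gamma * gamma) * (y * y - 1))
      by (rewrite <- Ey; nra).
    unfold D. rewrite Ez. nra. }
  assert (Hnum : z * x - y = sx * D).
  { assert (E1 : y * (sx * sx) = y * (x * x - 1)) by (rewrite Ex; reflexivity).
    unfold D. rewrite Ez. nra. }
  rewrite Hz, Hnum, <- Ex, sqrt_square by lra.
  f_equal. unfold Rdiv. rewrite Rinv_mult.
  replace (sx * D * (/ sqrt (D * D + sigma * sy * (sigma * sy)) * / sx))
    with (D * / sqrt (D * D + sigma * sy * (sigma * sy)) * (sx * / sx)) by ring.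
  rewrite Rinv_r by lra. ring.
Qed.

Lemma sin_lower (a : R) : 0 <= a <= 1 -> a - a ^ 3 / 6 <= sin a.
Proof.
  intros Ha. pose proof PI2_1.
  destruct (SIN a) as [Hlb _]; try lra.
  replace (sin_lb a) with (a - a ^ 3 / 6 + a ^ 5 / 120 - a ^ 7 / 5040) in Hlb
    by (unfold sin_lb, sin_approx, sin_term; simpl; field).
  pose proof (pow_le a 5 (proj1 Ha)).
  assert (a ^ 7 = a ^ 5 * (a * a)) by ring.
  assert (a * a <= 1) by nra.
  assert (a ^ 7 <= a ^ 5) by nra.
  lra.
Qed.

(* tan k >= k + k^3/3 for small k, via cos k = 1 - 2 sin^2 (k/2). *)
Lemma tan_lower (k : R) : 0 < k <= 1/2 -> cos k * (k + k ^ 3 / 3) <= sin k.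
Proof.
  intros Hk.
  pose proof (sin_lower k ltac:(lra)) as Hs.
  pose proof (sin_lower (k / 2) ltac:(lra)) as Hs2.
  assert (Hc : cos k = 1 - 2 * sin (k / 2) * sin (k / 2)).
  { rewrite <- cos_2a_sin. f_equal. field. }
  set (w := k / 2 - (k / 2) ^ 3 / 6) in *.
  assert (Hw : 0 <= w) by (unfold w; nra).
  assert (Hcw : cos k <= 1 - 2 * w * w) by nra.
  assert (0 < k + k ^ 3 / 3) by nra.
  apply Rle_trans with ((1 - 2 * w * w) * (k + k ^ 3 / 3)); [nra |].
  apply Rle_trans with (k - k ^ 3 / 6); [| lra].
  assert (E : k - k ^ 3 / 6 - (1 - 2 * w * w) * (k + k ^ 3 / 3)
            = k ^ 5 * (1 / 8 - (1 / 72 - 1 / 1152) * k ^ 2 + k ^ 4 / 3456))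
    by (unfold w; field).
  assert (0 <= k ^ 5) by (apply pow_le; lra).
  assert (0 <= 1 / 8 - (1 / 72 - 1 / 1152) * k ^ 2 + k ^ 4 / 3456) by nra.
  nra.
Qed.

Lemma acos_lt (w k : R) : 0 < k <= PI -> cos k < w -> acos w < k.
Proof.
  intros Hk Hw. pose proof (acos_bound w). pose proof (COS_bound k).
  destruct (Rle_dec 1 w) as [h | h].
  - unfold acos. destruct (Rle_dec w (-1)); [lra |].
    destruct (Rle_dec 1 w); [lra | contradiction].
  - apply cos_decreasing_0; try lra. rewrite cos_acos; lra.
Qed.

Lemma angle_lt_of_tan (D N k : R) : 0 < D -> 0 < N -> 0 < k < PI / 2 ->
  N * cos k < D * sin k -> acos (D / sqrt (D * D + N * N)) < k.
Proof.
  intros HD HN Hk Htan.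
  assert (Hck : 0 < cos k) by (apply cos_gt_0; lra).
  assert (Hsk : 0 < sin k) by (apply sin_gt_0; pose proof PI_RGT_0; lra).
  pose proof (sin2_cos2 k) as Hsc. unfold Rsqr in Hsc.
  set (Q := sqrt (D * D + N * N)).
  assert (HQ2 : Q * Q = D * D + N * N) by (apply sqrt_sqrt; nra).
  assert (HQ : 0 < Q) by (apply sqrt_lt_R0; nra).
  assert (HcQ : cos k * Q < D).
  { assert ((N * cos k) * (N * cos k) < (D * sin k) * (D * sin k))
      by (apply Rmult_le_0_lt_compat; nra).
    assert ((cos k * Q) * (cos k * Q) < D * D) by nra.
    nra. }
  apply acos_lt; [pose proof PI_RGT_0; lra |].
  apply Rmult_lt_reg_r with Q; [exact HQ |]. field_simplify; lra.
Qed.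

(* Monotonicity estimate behind the angle bound: with M = e^L < p, q the
   quantity p (q^2 - 1) / (p^2 (c^2 q^2 + s^2) - (c^2 + s^2 q^2)), which is
   tan A up to the factor 2 s c, is below its limit 1 / (M^2 c^2 - s^2) at
   p = M, q = oo. *)
Lemma far_tangent_poly (c s M p q : R) : c * c + s * s = 1 -> 1 < M -> M < p -> M < q ->
  p * (q * q - 1) * (M * M * (c * c) - s * s)
  < M * (p * p * (c * c * (q * q) + s * s) - (c * c + s * s * (q * q))).
Proof.
  intros Hcs HM Hp Hq.
  set (al := c * c * (q * q) + s * s). set (be := c * c + s * s * (q * q)).
  assert (Hqq : 1 < q * q) by nra.
  assert (Hal : 1 <= al) by (unfold al; nra).
  assert (Hbe : 1 <= be) by (unfold be; nra).
  assert (Hq2 : (q * q - 1) * (M * M * (c * c) - s * s) = M * M * al - be - (M * M - 1))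
    by (unfold al, be; replace (c * c) with (1 - s * s) by lra; ring).
  assert (Hp2 : M * (p * p * al - be) - p * (M * M * al - be) = (p - M) * (M * p * al + be))
    by ring.
  assert (HMp : 0 < M * p) by nra.
  assert (0 < (p - M) * (M * p * al + be)) by (apply Rmult_lt_0_compat; nra).
  rewrite Rmult_assoc, Hq2. nra.
Qed.

(* The limiting tangent 2 s c M / (M^2 c^2 - s^2), M = m^2, is at most
   k + k^3/3 <= tan k for k = h s / m with h = sqrt 2, provided c^2 m^2 >= 2. *)
Lemma limit_tan_bound (s c m h : R) :
  0 < s -> 0 < c -> c * c + s * s = 1 -> 0 < m -> 0 < h -> h * h = 2 ->
  2 <= c * c * (m * m) ->
  2 * s * c * (m * m)
  <= (h * s / m + (h * s / m) ^ 3 / 3) * ((m * m) * (m * m) * (c * c) - s * s).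
Proof.
  intros Hs Hc Hcs Hm Hh Hh2 HM.
  set (t := h / (c * m)).
  assert (Ht : h = t * c * m) by (unfold t; field; split; lra).
  assert (Htp : 0 < t) by (unfold t; apply Rdiv_lt_0_compat; nra).
  assert (E : t * t * (c * c * (m * m)) = 2) by (rewrite <- Hh2, Ht; ring).
  assert (Ht1 : t <= 1) by nra.
  assert (E1 : t * t * (c * c) = 2 / (m * m)) by (field_simplify_eq; [lra | nra]).
  assert (E2 : c * c * (m * m) = 2 / (t * t)) by (field_simplify_eq; [lra | nra]).
  rewrite Ht.
  replace (t * c * m * s / m) with (t * c * s) by (field; lra).
  replace ((t * c * s) ^ 3) with (t * c * s * (t * t * (c * c)) * (s * s)) by ring.
  rewrite E1.
  replace ((m * m) * (m * m) * (c * c)) with ((m * m) * (c * c * (m * m))) by ring.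
  rewrite E2.
  replace ((t * c * s + t * c * s * (2 / (m * m)) * (s * s) / 3) * (m * m * (2 / (t * t)) - s * s))
    with (c * s * ((1 + 2 * (s * s) / (3 * (m * m))) * (2 * (m * m) / t - s * s * t)))
    by (field; split; lra).
  replace (2 * s * c * (m * m)) with (c * s * (2 * (m * m))) by ring.
  apply Rmult_le_compat_l; [nra |].
  assert (Hm2 : 2 <= m * m) by nra.
  assert (Hg : 2 * (m * m) - s * s <= 2 * (m * m) / t - s * s * t).
  { assert (2 * (m * m) <= 2 * (m * m) / t).
    { apply Rmult_le_reg_r with t; [lra |]. field_simplify; nra. }
    nra. }
  assert (Hk : 0 <= 2 * (s * s) / (3 * (m * m)))
    by (apply Rmult_le_pos; [nra | apply Rlt_le, Rinv_0_lt_compat; nra]).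
  apply Rle_trans with ((1 + 2 * (s * s) / (3 * (m * m))) * (2 * (m * m) - s * s)).
  - replace ((1 + 2 * (s * s) / (3 * (m * m))) * (2 * (m * m) - s * s)) with
      (2 * (m * m) + (s * s) / 3 * (1 - 2 * (s * s) / (m * m))) by (field; lra).
    assert (2 * (s * s) / (m * m) <= 1).
    { apply Rmult_le_reg_r with (m * m); [nra |]. field_simplify; nra. }
    nra.
  - apply Rmult_le_compat_l; lra.
Qed.

Lemma far_angle_small (s c m : R) : 0 < s -> 0 < c -> c * c + s * s = 1 -> 0 < m ->
  2 <= c * c * (m * m) -> 0 < sqrt 2 * s / m <= 1 / 2.
Proof.
  intros Hs Hc Hcs Hm Hlarge.
  assert (Hsqrt2 : 0 < sqrt 2) by (apply sqrt_lt_R0; lra).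
  set (k := sqrt 2 * s / m).
  assert (Hk : 0 < k) by (unfold k; apply Rdiv_lt_0_compat; nra).
  assert (Ek : k * k * (m * m) = 2 * (s * s))
    by (unfold k; field_simplify; [rewrite pow2_sqrt by lra; field |]; lra).
  assert (Hsc : 4 * (s * s * (c * c)) <= 1)
    by (pose proof (Rle_0_sqr (c * c - s * s)); unfold Rsqr in *; nra).
  assert (k * k * (m * m) * (c * c) <= s * s * (c * c) * (m * m)) by nra.
  assert (k * k <= 1 / 4) by nra.
  split; nra.
Qed.

Lemma far_defect_bound (c M p q : R) : 1 <= M -> 2 <= c * c * M -> M < p -> M < q ->
  (p * p + q * q - 2) / (p * q * (p * q) - 1) <= c * c / M.
Proof.
  intros HM1 HM Hp Hq.
  assert (M * M <= q * q) by nra. assert (M * M <= p * p) by nra.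
  assert (M * M * (p * p) <= q * q * (p * p)) by (apply Rmult_le_compat_r; [nra | lra]).
  assert (M * M * (q * q) <= p * p * (q * q)) by (apply Rmult_le_compat_r; [nra | lra]).
  assert (Hpq : 1 < p * q) by nra.
  assert (HP1 : 1 < p * q * (p * q)) by nra.
  apply Rle_trans with (2 / (M * M)).
  - apply Rmult_le_reg_r with ((p * q * (p * q) - 1) * (M * M));
      [apply Rmult_lt_0_compat; nra |].
    replace ((p * p + q * q - 2) / (p * q * (p * q) - 1) * ((p * q * (p * q) - 1) * (M * M)))
      with ((p * p + q * q - 2) * (M * M)) by (field; lra).
    replace (2 / (M * M) * ((p * q * (p * q) - 1) * (M * M)))
      with (2 * (p * q * (p * q) - 1)) by (field; lra).
    nra.
  - apply Rmult_le_reg_r with (M * M); [nra |].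
    replace (2 / (M * M) * (M * M)) with 2 by (field; lra).
    replace (c * c / M * (M * M)) with (c * c * M) by (field; lra).
    nra.
Qed.

(* A triangle with angle pi - theta at C, c = cos (theta/2), s = sin (theta/2),
   whose sides at C have lengths log p, log q > 2 log m with c^2 m^2 >= 2.
   Here x, y are the hyperbolic cosines of these sides, sx, sy their
   hyperbolic sines and z the hyperbolic cosine of the third side. *)
Section FarTriangle.

Variables (c s m p q x sx y sy z : R).
Hypotheses (Hs : 0 < s) (Hc : 0 < c) (Hcs : c * c + s * s = 1) (Hm : 0 < m)
  (Hlarge : 2 <= c * c * (m * m)) (Hp : m * m < p) (Hq : m * m < q).
Hypotheses (Ex : x = (p + / p) / 2) (Esx : sx = (p - / p) / 2)
  (Ey : y = (q + / q) / 2) (Esy : sy = (q - / q) / 2)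
  (Ez : z = x * y + (c * c - s * s) * sx * sy).

Let HM2 : 2 <= m * m.
Proof. nra. Qed.

Let Hp2 : 2 < p.
Proof. pose proof HM2. lra. Qed.

Let Hq2 : 2 < q.
Proof. pose proof HM2. lra. Qed.

Lemma third_side_closed_form :
  2 * z * (p * q) = c * c * (p * p * (q * q) + 1) + s * s * (p * p + q * q).
Proof.
  rewrite Ez, Ex, Esx, Ey, Esy. replace (c * c) with (1 - s * s) by lra.
  field. split; lra.
Qed.

Lemma third_side_cosh_gt1 : 1 < z.
Proof.
  pose proof third_side_closed_form as Hz. pose proof Hp2. pose proof Hq2.
  assert (Hpq : 1 < p * q) by nra.
  assert (A0 : 2 * (p * q) <= p * p + q * q)
    by (pose proof (Rle_0_sqr (p - q)); unfold Rsqr in *; lra).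
  assert (A1 : 2 * (p * q) < p * p * (q * q) + 1)
    by (assert (0 < (p * q - 1) * (p * q - 1)) by nra; lra).
  assert (c * c * (2 * (p * q)) < c * c * (p * p * (q * q) + 1)) by (apply Rmult_lt_compat_l; nra).
  assert (s * s * (2 * (p * q)) <= s * s * (p * p + q * q)) by (apply Rmult_le_compat_l; nra).
  assert (Hprod : 2 * (p * q) * 1 < 2 * (p * q) * z) by nra.
  apply Rmult_lt_reg_l in Hprod; lra.
Qed.

(* exp |AB| > c^2 p q: the excess |CA| + |CB| - |AB| is below I(theta). *)
Lemma third_side_exp_lower : c * c * (p * q) < z + sqrt (z * z - 1).
Proof.
  apply exp_arcosh_lower; [exact third_side_cosh_gt1 |].
  pose proof third_side_closed_form as Hz. pose proof Hp2. pose proof Hq2.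
  assert (E : 2 * (c * c * (p * q)) * z - (c * c * (p * q)) * (c * c * (p * q)) - 1
              = s * s * (c * c * (p * p + q * q) - 1 - c * c)).
  { replace (2 * (c * c * (p * q)) * z) with (c * c * (2 * z * (p * q))) by ring.
    rewrite Hz. replace (c * c) with (1 - s * s) by lra. ring. }
  assert (0 < c * c * (p * p + q * q) - 1 - c * c) by nra.
  assert (0 < s * s) by nra.
  nra.
Qed.

(* Comparison value for the upper bound on exp |AB|: for
   Rup = p q (1 - s^2 e0) the quadratic Rup^2 - 2 z Rup + 1 is a square. *)
Let e0 : R := (p * p - 1) * (q * q - 1) / (p * q * (p * q) - 1).
Let Rup : R := p * q * (1 - s * s * e0).

Lemma upper_comparison_root : 2 * Rup * z <= Rup * Rup + 1.
Proof.
  pose proof third_side_closed_form as Hz. pose proof Hp2. pose proof Hq2.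
  assert (Hpq : 4 < p * q) by nra.
  assert (HP1 : 1 < p * q * (p * q)) by nra.
  assert (ID : Rup * Rup + 1 - 2 * Rup * z
               = (s * s * (p * p - 1) * (q * q - 1) / (p * q * (p * q) - 1)) ^ 2).
  { replace (2 * Rup * z) with (Rup * (2 * z * (p * q)) / (p * q)) by (field; lra).
    rewrite Hz. unfold Rup, e0. replace (c * c) with (1 - s * s) by lra.
    field. split; lra. }
  pose proof (pow2_ge_0 (s * s * (p * p - 1) * (q * q - 1) / (p * q * (p * q) - 1))).
  lra.
Qed.

Lemma upper_comparison_bounds :
  c * c * (p * q) <= Rup <= c * c * (p * q) * (1 + s * s / (m * m)).
Proof.
  pose proof Hp2. pose proof Hq2.
  assert (Hpq : 4 < p * q) by nra.
  assert (HP1 : 1 < p * q * (p * q)) by nra.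
  assert (F0 : 1 - e0 = (p * p + q * q - 2) / (p * q * (p * q) - 1))
    by (unfold e0; field; lra).
  assert (He1 : 0 <= 1 - e0) by (rewrite F0; apply Rle_mult_inv_pos; nra).
  assert (HRW : Rup - c * c * (p * q) = s * s * (p * q) * (1 - e0))
    by (unfold Rup; replace (c * c) with (1 - s * s) by lra; ring).
  assert (0 <= s * s * (p * q) * (1 - e0)) by (apply Rmult_le_pos; nra).
  split; [lra |].
  assert (Hb : 1 - e0 <= c * c / (m * m))
    by (rewrite F0; apply far_defect_bound; nra).
  assert (s * s * (p * q) * (1 - e0) <= s * s * (p * q) * (c * c / (m * m)))
    by (apply Rmult_le_compat_l; nra).
  replace (c * c * (p * q) * (1 + s * s / (m * m)))
    with (c * c * (p * q) + s * s * (p * q) * (c * c / (m * m))) by (field; lra).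
  lra.
Qed.

(* exp |AB| <= c^2 p q (1 + s^2/m^2): the excess is at least I(theta) - s^2/m^2. *)
Lemma third_side_exp_upper :
  z + sqrt (z * z - 1) <= c * c * (p * q) * (1 + s * s / (m * m)).
Proof.
  pose proof upper_comparison_root. pose proof upper_comparison_bounds.
  pose proof Hp2. pose proof Hq2.
  assert (Hcq : 0 < c * c * q) by nra.
  assert (HW : 1 < c * c * (p * q)) by nra.
  apply Rle_trans with Rup; [| lra].
  apply exp_arcosh_upper; [| lra].
  assert (Rup * (2 * z) <= Rup * (2 * Rup)) by nra.
  assert (2 * z <= 2 * Rup) by (apply Rmult_le_reg_l with Rup; lra).
  lra.
Qed.

(* Numerator D and denominator N of the cotangent of the angle at A, as given by
   vertex_angle_tangent_form with cos C = c^2 - s^2 and sin C = 2 s c. *)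
Let D : R := y * sx + (c * c - s * s) * x * sy.
Let N : R := 2 * s * c * sy.

Lemma cot_numerator_closed_form :
  D * (2 * p * q) = p * p * (c * c * (q * q) + s * s) - (c * c + s * s * (q * q)).
Proof.
  unfold D. rewrite Ex, Esx, Ey, Esy. replace (c * c) with (1 - s * s) by lra.
  field. split; lra.
Qed.

Lemma cot_numerator_pos : 0 < D.
Proof.
  pose proof Hp2. pose proof Hq2. pose proof cot_numerator_closed_form as FD.
  assert (Hpp : m * m < p * p) by nra.
  assert (c * c * (m * m) < c * c * (p * p)) by (apply Rmult_lt_compat_l; nra).
  assert (Hqq : 1 < q * q) by nra.
  assert (Hbe : c * c + s * s * (q * q) <= q * q) by nra.
  assert (Hal : c * c * (p * p) * (q * q) <= p * p * (c * c * (q * q) + s * s)) by nra.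
  assert (q * q < c * c * (p * p) * (q * q)) by nra.
  assert (0 < 2 * p * q) by nra.
  nra.
Qed.

Lemma far_tangent_ratio :
  N * ((m * m) * (m * m) * (c * c) - s * s) < 2 * s * c * (m * m) * D.
Proof.
  pose proof Hp2. pose proof Hq2. pose proof HM2. pose proof cot_numerator_closed_form as FD.
  set (M := m * m) in *.
  assert (Hpq : 0 < 2 * p * q) by nra.
  assert (FN : N * (2 * p * q) = 2 * s * c * (p * (q * q - 1)))
    by (unfold N; rewrite Esy; field; lra).
  pose proof (far_tangent_poly c s M p q Hcs ltac:(lra) Hp Hq) as Hpoly.
  apply Rmult_lt_reg_r with (2 * p * q); [exact Hpq |].
  replace (N * (M * M * (c * c) - s * s) * (2 * p * q))
    with (2 * s * c * (p * (q * q - 1) * (M * M * (c * c) - s * s)))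
    by (transitivity (N * (2 * p * q) * (M * M * (c * c) - s * s)); [rewrite FN; ring | ring]).
  replace (2 * s * c * M * D * (2 * p * q))
    with (2 * s * c * (M * (p * p * (c * c * (q * q) + s * s) - (c * c + s * s * (q * q)))))
    by (transitivity (2 * s * c * M * (D * (2 * p * q))); [rewrite FD; ring | ring]).
  apply Rmult_lt_compat_l; [nra | exact Hpoly].
Qed.

Lemma far_vertex_angle_lt : vertex_angle z x y < sqrt 2 * s / m.
Proof.
  pose proof Hp2. pose proof Hq2. pose proof HM2.
  assert (Hgs : (c * c - s * s) * (c * c - s * s) + (2 * s * c) * (2 * s * c) = 1)
    by (replace 1 with ((c * c + s * s) * (c * c + s * s)) by (rewrite Hcs; ring); ring).
  rewrite (vertex_angle_tangent_form x sx y sy z (c * c - s * s) (2 * s * c)); try assumption;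
    [| rewrite Esx; apply exp_param_sinh_pos; lra
     | rewrite Esx, Ex; apply exp_param_sq; lra
     | rewrite Esy, Ey; apply exp_param_sq; lra].
  fold D N.
  pose proof cot_numerator_pos as HD. pose proof far_tangent_ratio as Htan.
  set (M := m * m) in *. set (k := sqrt 2 * s / m).
  assert (HN : 0 < N) by (unfold N; rewrite Esy;
    pose proof (exp_param_sinh_pos q ltac:(lra)); assert (0 < s * c) by nra; nra).
  assert (HMc : 0 < M * M * (c * c) - s * s)
    by (assert (2 * M <= M * (c * c * M)) by nra; nra).
  pose proof (limit_tan_bound s c m (sqrt 2) Hs Hc Hcs Hm
                (sqrt_lt_R0 2 ltac:(lra)) (sqrt_sqrt 2 ltac:(lra)) Hlarge) as Hiso.
  fold M k in Hiso.
  destruct (far_angle_small s c m Hs Hc Hcs Hm Hlarge) as [Hk0 Hk1]. fold k in Hk0, Hk1.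
  assert (HNU : N < (k + k ^ 3 / 3) * D).
  { assert (N * (M * M * (c * c) - s * s) < (k + k ^ 3 / 3) * D * (M * M * (c * c) - s * s))
      by nra.
    nra. }
  pose proof (tan_lower k ltac:(lra)) as Htk.
  assert (Hck : 0 < cos k) by (apply cos_gt_0; pose proof PI2_1; lra).
  apply angle_lt_of_tan; [exact HD | exact HN | pose proof PI2_1; lra |].
  apply Rlt_le_trans with (cos k * ((k + k ^ 3 / 3) * D)); nra.
Qed.

End FarTriangle.

Lemma exp_half_sq (L : R) : exp (L / 2) * exp (L / 2) = exp L.
Proof. rewrite <- exp_plus. f_equal. field. Qed.

Lemma exp_half_ln2 : exp (ln 2 / 2) = sqrt 2.
Proof.
  rewrite <- (sqrt_square (exp (ln 2 / 2))) by (left; apply exp_pos).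
  rewrite exp_half_sq, exp_ln by lra. reflexivity.
Qed.

Lemma Ifun_cos_half (theta : R) : 0 < cos (theta / 2) ->
  Ifun theta = - (2 * ln (cos (theta / 2))).
Proof.
  intros Hc. unfold Ifun. unfold Rdiv at 1. rewrite Rmult_1_l, ln_Rinv by exact Hc. ring.
Qed.

Lemma far_side_condition (theta L : R) : 0 < cos (theta / 2) -> Ifun theta + ln 2 <= L ->
  2 <= cos (theta / 2) * cos (theta / 2) * (exp (L / 2) * exp (L / 2)).
Proof.
  intros Hc HL. rewrite exp_half_sq, Ifun_cos_half in * by exact Hc.
  assert (E : exp (- (2 * ln (cos (theta / 2))) + ln 2)
              = 2 / (cos (theta / 2) * cos (theta / 2))).
  { rewrite exp_plus, exp_Ropp, exp_ln by lra.
    replace (2 * ln (cos (theta / 2))) with (ln (cos (theta / 2)) + ln (cos (theta / 2)))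
      by ring.
    rewrite exp_plus, exp_ln by exact Hc. field. lra. }
  assert (Hle : 2 / (cos (theta / 2) * cos (theta / 2)) <= exp L).
  { rewrite <- E. destruct HL as [HL | HL];
      [left; apply exp_increasing; exact HL | rewrite HL; lra]. }
  apply Rmult_le_reg_r with (/ (cos (theta / 2) * cos (theta / 2))).
  { apply Rinv_0_lt_compat; nra. }
  replace (cos (theta / 2) * cos (theta / 2) * exp L * / (cos (theta / 2) * cos (theta / 2)))
    with (exp L) by (field; lra).
  exact Hle.
Qed.

Lemma ln_sandwich (W r eps : R) : 0 < W -> 0 <= eps -> W < r -> r <= W * (1 + eps) ->
  ln W < ln r /\ ln r <= ln W + eps.
Proof.
  intros HW He Hlo Hup. split; [apply ln_increasing; lra |].
  apply Rle_trans with (ln (W * (1 + eps))).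
  - destruct Hup as [Hup | Hup]; [left; apply ln_increasing; lra | rewrite Hup; lra].
  - rewrite ln_mult by lra.
    assert (ln (1 + eps) <= eps).
    { rewrite <- (ln_exp eps) at 2. pose proof (exp_ineq1_le eps) as Hexp.
      destruct (Rle_lt_or_eq_dec _ _ Hexp) as [h | h];
        [left; apply ln_increasing; lra | rewrite h; lra]. }
    lra.
Qed.

Lemma exp_angle_constant (L : R) : exp ((- L + 3 * ln 2) / 2) = 2 * (sqrt 2 / exp (L / 2)).
Proof.
  replace ((- L + 3 * ln 2) / 2) with (- (L / 2) + (ln 2 + ln 2 / 2)) by field.
  rewrite exp_plus, exp_Ropp, exp_plus, exp_ln, exp_half_ln2 by lra.
  field. apply Rgt_not_eq, exp_pos.
Qed.

Lemma excess_error_bound (s L : R) : 0 < s <= 1 -> ln 2 < L ->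
  s * s / (exp (L / 2) * exp (L / 2)) < exp ((- L + 5 * ln 2) / 2) * s / (L - ln 2).
Proof.
  intros Hs HL. set (m := exp (L / 2)).
  assert (Hm : 0 < m) by apply exp_pos.
  assert (E5 : exp ((- L + 5 * ln 2) / 2) = 4 * sqrt 2 / m).
  { replace ((- L + 5 * ln 2) / 2) with (- (L / 2) + ((ln 2 + ln 2) + ln 2 / 2)) by field.
    rewrite exp_plus, exp_Ropp, !exp_plus, exp_ln, exp_half_ln2 by lra. fold m. field. lra. }
  assert (Hm2 : L / 2 < m) by (unfold m; pose proof (exp_ineq1_le (L / 2)); lra).
  assert (Hsqrt2 : 1 < sqrt 2) by (rewrite <- sqrt_1; apply sqrt_lt_1; lra).
  pose proof ln_lt_2.
  assert (s * (L - ln 2) < 4 * sqrt 2 * m) by nra.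
  rewrite E5.
  apply Rmult_lt_reg_r with (m * m * (L - ln 2) / s);
    [apply Rdiv_lt_0_compat; [apply Rmult_lt_0_compat; nra | lra] |].
  replace (s * s / (m * m) * (m * m * (L - ln 2) / s)) with (s * (L - ln 2)) by (field; lra).
  replace (4 * sqrt 2 / m * s / (L - ln 2) * (m * m * (L - ln 2) / s))
    with (4 * sqrt 2 * m) by (field; lra).
  lra.
Qed.

Lemma half_angle_facts (theta : R) : 0 < theta < PI ->
  0 < cos (theta / 2) /\ 0 < sin (theta / 2) /\
  cos (theta / 2) * cos (theta / 2) + sin (theta / 2) * sin (theta / 2) = 1 /\
  cos theta = cos (theta / 2) * cos (theta / 2) - sin (theta / 2) * sin (theta / 2).
Proof.
  intros Ht. pose proof PI2_1.
  split; [apply cos_gt_0; lra |]. split; [apply sin_gt_0; lra |].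
  split; [pose proof (sin2_cos2 (theta / 2)); unfold Rsqr in *; lra |].
  rewrite <- cos_2a. f_equal. field.
Qed.

Lemma long_side_param (x L : R) : 0 < L -> arcosh x > L ->
  x = (exp (arcosh x) + / exp (arcosh x)) / 2 /\
  sqrt (x * x - 1) = (exp (arcosh x) - / exp (arcosh x)) / 2 /\
  exp (L / 2) * exp (L / 2) < exp (arcosh x).
Proof.
  intros HL Hx. destruct (exp_param_of_arcosh x ltac:(lra)) as [Ex Esx].
  split; [exact Ex | split; [exact Esx |]].
  rewrite exp_half_sq. apply exp_increasing. lra.
Qed.

Lemma far_triangle_cosh (theta L x y z : R) :
  0 < theta < PI -> Ifun theta + ln 2 <= L -> arcosh x > L -> arcosh y > L ->
  vertex_angle x y z = PI - theta ->
  vertex_angle z x y + vertex_angle z y x < exp ((- L + 3 * ln 2) / 2) * sin (theta / 2) /\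
  Ifun theta - exp ((- L + 5 * ln 2) / 2) * sin (theta / 2) / (L - ln 2)
    < arcosh x + arcosh y - arcosh z /\
  arcosh x + arcosh y - arcosh z < Ifun theta.
Proof.
  intros Ht HL Hx Hy HC. pose proof ln_lt_2.
  destruct (half_angle_facts theta Ht) as [Hc [Hs [Hcs Hcos]]].
  set (c := cos (theta / 2)) in *. set (s := sin (theta / 2)) in *.
  set (m := exp (L / 2)).
  assert (HI : Ifun theta = - (2 * ln c)) by exact (Ifun_cos_half theta Hc).
  assert (Hlnc : ln c < 0) by (rewrite <- ln_1; apply ln_increasing; nra).
  pose proof (far_side_condition theta L Hc HL) as Hlarge. fold c m in Hlarge.
  assert (Hm : 0 < m) by apply exp_pos.
  assert (HM : 2 <= m * m) by (assert (c * c <= 1) by nra; nra).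
  destruct (long_side_param x L ltac:(lra) Hx) as [Ex [Esx Hp]].
  destruct (long_side_param y L ltac:(lra) Hy) as [Ey [Esy Hq]].
  set (p := exp (arcosh x)) in *. set (q := exp (arcosh y)) in *. fold m in Hp, Hq.
  assert (Ez : z = x * y + (c * c - s * s) * sqrt (x * x - 1) * sqrt (y * y - 1)).
  { rewrite <- Hcos. apply law_of_cosines_supplement; [lra | | | exact HC];
      [rewrite Esx | rewrite Esy]; apply exp_param_sinh_pos; lra. }
  assert (Ez' : z = y * x + (c * c - s * s) * sqrt (y * y - 1) * sqrt (x * x - 1))
    by (rewrite Ez; ring).
  pose proof (far_vertex_angle_lt c s m p q x _ y _ z Hs Hc Hcs Hm Hlarge Hp Hq Ex Esx Ey Esy Ez)
    as HA.
  pose proof (far_vertex_angle_lt c s m q p y _ x _ z Hs Hc Hcs Hm Hlarge Hq Hp Ey Esy Ex Esx Ez')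
    as HB.
  destruct (ln_sandwich (c * c * (p * q)) (z + sqrt (z * z - 1)) (s * s / (m * m)))
    as [Hlow Hup].
  { apply Rmult_lt_0_compat; nra. }
  { apply Rle_mult_inv_pos; nra. }
  { exact (third_side_exp_lower c s m p q x _ y _ z Hs Hc Hcs Hlarge Hp Hq Ex Esx Ey Esy Ez). }
  { exact (third_side_exp_upper c s m p q x _ y _ z Hs Hc Hcs Hm Hlarge Hp Hq Ex Esx Ey Esy Ez). }
  assert (Hpq : ln (c * c * (p * q)) = 2 * ln c + arcosh x + arcosh y)
    by (unfold p, q; rewrite !ln_mult, !ln_exp
          by (try apply Rmult_lt_0_compat; try apply exp_pos; lra); ring).
  pose proof (excess_error_bound s L ltac:(nra) ltac:(lra)) as Herr. fold s m in Herr.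
  change (arcosh z) with (ln (z + sqrt (z * z - 1))).
  rewrite HI, exp_angle_constant. fold s m.
  replace (2 * (sqrt 2 / m) * s) with (sqrt 2 * s / m + sqrt 2 * s / m) by (field; lra).
  split; [lra | split; lra].
Qed.

Theorem mainTheorem11 (n : nat) (hn : (2 <= n)%nat) (theta L : R)
  (A B C : nat -> R)
  (htheta : 0 < theta < PI)
  (hL : Ifun theta + ln 2 <= L)
  (hA : hyp_point n A) (hB : hyp_point n B) (hC : hyp_point n C)
  (hCA : hdist n C A > L) (hCB : hdist n C B > L)
  (hangC : hangle n C A B = PI - theta) :
  hangle n A B C + hangle n B A C < exp ((- L + 3 * ln 2) / 2) * sin (theta / 2)
  /\
  Ifun theta - exp ((- L + 5 * ln 2) / 2) * sin (theta / 2) / (L - ln 2)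
    < hdist n C A + hdist n C B - hdist n A B
  /\ hdist n C A + hdist n C B - hdist n A B < Ifun theta.
Proof.
  destruct hA as [hAA _], hB as [hBB _], hC as [hCC _].
  rewrite !hangle_vertex_angle in * by assumption.
  rewrite (chd_sym n A C), (chd_sym n B C), (chd_sym n B A).
  exact (far_triangle_cosh theta L _ _ _ htheta hL hCA hCB hangC).
Qed.
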